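(* Let $V$ be a finite dimensional normed vector space and let $(V,H_i,L_i)$ be holonomic spaces such that the family $\{H_i\}$ is of finite representation type and the holonomic metrics $d_{L_i}$ converge uniformly on compact sets to a semi-metric $d_\infty$ on $V$. Then there exists a closed subgroup $G\le O(V)$ such that for all $u,v\in V$, $d_\infty(u,v)=0$ if and only if $v=gu$ for some $g\in G$.
   Context: $O(V)$ is the group of norm-preserving linear maps of $V$. A group-norm on $H$ is $L:H\to\mathbb{R}$ with $L(a)\ge0$, $L(a)=0$ iff $a=e$, $L(a^{-1})=L(a)$, $L(ab)\le L(a)+L(b)$. A holonomic space is $(V,H,L)$ with $H\le O(V)$, $L$ a group-norm, such that for every $u\in V$ there is $R>0$ with $\|v-w\|^2-\|av-w\|^2\le L(a)^2$ for all $a\in H$ and $\|u-v\|,\|u-w\|<R$; its holonomic metric is $d_L(u,v)=\inf_{a\in H}\sqrt{L(a)^2+\|au-v\|^2}$. A family $\{H_i\}$ of subgroups of $O(V)$ is of finite representation type if there are finitely many subgroups $K_1,\dots,K_n\le O(V)$ such that each $H_i$ equals $\phi^{-1}K_j\phi$ for some $j$ and some $\phi\in O(V)$. *)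

From Stdlib Require Import Reals List.
From Stdlib Require Fin.
Open Scope R_scope.

(* Every finite-dimensional real normed space is (linearly, isometrically)
   isomorphic to R^n equipped with some norm; we model V as Fin.t n -> R
   together with an arbitrary norm [nrm] on it. *)
Definition Vec (n : nat) := Fin.t n -> R.

Definition vadd {n} (x y : Vec n) : Vec n := fun i => x i + y i.
Definition vsub {n} (x y : Vec n) : Vec n := fun i => x i - y i.
Definition vscal {n} (c : R) (x : Vec n) : Vec n := fun i => c * x i.
Definition vzero {n} : Vec n := fun _ => 0.

Definition is_norm {n} (nrm : Vec n -> R) : Prop :=
  (forall x, 0 <= nrm x) /\
  (forall x, nrm x = 0 -> forall i, x i = 0) /\
  (forall c x, nrm (vscal c x) = Rabs c * nrm x) /\
  (forall x y, nrm (vadd x y) <= nrm x + nrm y).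

Definition is_linear {n} (a : Vec n -> Vec n) : Prop :=
  (forall x y, a (vadd x y) = vadd (a x) (a y)) /\
  (forall c x, a (vscal c x) = vscal c (a x)).

Definition in_O {n} (nrm : Vec n -> R) (a : Vec n -> Vec n) : Prop :=
  is_linear a /\ (forall x, nrm (a x) = nrm x) /\ (forall y, exists x, a x = y).

Definition subgroup_O {n} (nrm : Vec n -> R) (H : (Vec n -> Vec n) -> Prop) : Prop :=
  (forall a, H a -> in_O nrm a) /\
  H (fun x => x) /\
  (forall a b, H a -> H b -> H (fun x => a (b x))) /\
  (forall a, H a -> exists b, H b /\ (forall x, b (a x) = x) /\ (forall x, a (b x) = x)).

Definition group_norm {n} (H : (Vec n -> Vec n) -> Prop) (L : (Vec n -> Vec n) -> R) : Prop :=
  (forall a, H a -> 0 <= L a) /\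
  (forall a, H a -> (L a = 0 <-> forall x, a x = x)) /\
  (forall a b, H a -> H b -> (forall x, b (a x) = x) -> (forall x, a (b x) = x) ->
     L b = L a) /\
  (forall a b, H a -> H b -> L (fun x => a (b x)) <= L a + L b).

Definition holonomic {n} (nrm : Vec n -> R) (H : (Vec n -> Vec n) -> Prop)
    (L : (Vec n -> Vec n) -> R) : Prop :=
  subgroup_O nrm H /\ group_norm H L /\
  (forall u, exists Rad, 0 < Rad /\
     forall a v w, H a -> nrm (vsub u v) < Rad -> nrm (vsub u w) < Rad ->
       nrm (vsub v w) ^ 2 - nrm (vsub (a v) w) ^ 2 <= L a ^ 2).

Definition is_inf (S : R -> Prop) (m : R) : Prop :=
  (forall r, S r -> m <= r) /\ (forall m', (forall r, S r -> m' <= r) -> m' <= m).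

Definition is_holonomic_metric {n} (nrm : Vec n -> R) (H : (Vec n -> Vec n) -> Prop)
    (L : (Vec n -> Vec n) -> R) (d : Vec n -> Vec n -> R) : Prop :=
  forall u v, is_inf (fun r => exists a, H a /\
                 r = sqrt (L a ^ 2 + nrm (vsub (a u) v) ^ 2)) (d u v).

Definition finite_rep_type {n} (nrm : Vec n -> R)
    (H : nat -> (Vec n -> Vec n) -> Prop) : Prop :=
  exists (m : nat) (K : nat -> (Vec n -> Vec n) -> Prop),
    (forall j, (j < m)%nat -> subgroup_O nrm (K j)) /\
    forall i, exists j, (j < m)%nat /\
      exists phi psi, in_O nrm phi /\ (forall x, psi (phi x) = x) /\
        (forall x, phi (psi x) = x) /\
        (forall a, H i a <-> exists k, K j k /\ forall x, a x = psi (k (phi x))).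

Definition is_open {n} (nrm : Vec n -> R) (U : Vec n -> Prop) : Prop :=
  forall x, U x -> exists r, 0 < r /\ forall y, nrm (vsub y x) < r -> U y.

Definition is_compact {n} (nrm : Vec n -> R) (K : Vec n -> Prop) : Prop :=
  forall (I : Type) (U : I -> Vec n -> Prop),
    (forall i, is_open nrm (U i)) ->
    (forall x, K x -> exists i, U i x) ->
    exists l : list I, forall x, K x -> exists i, In i l /\ U i x.

(* d_i -> d uniformly on compact subsets of V x V (equivalently on K x K,
   K compact in V). *)
Definition unif_conv_compact {n} (nrm : Vec n -> R)
    (d : nat -> Vec n -> Vec n -> R) (dinf : Vec n -> Vec n -> R) : Prop :=
  forall K, is_compact nrm K ->
    forall eps, 0 < eps -> exists N, forall i, (N <= i)%nat ->
      forall u v, K u -> K v -> Rabs (d i u v - dinf u v) < eps.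

Definition semi_metric {n} (d : Vec n -> Vec n -> R) : Prop :=
  (forall u v, 0 <= d u v) /\ (forall u, d u u = 0) /\
  (forall u v, d u v = d v u) /\ (forall u v w, d u w <= d u v + d v w).

Definition op_conv {n} (nrm : Vec n -> R) (g : nat -> Vec n -> Vec n)
    (h : Vec n -> Vec n) : Prop :=
  forall eps, 0 < eps -> exists N, forall k, (N <= k)%nat ->
    forall x, nrm (vsub (g k x) (h x)) <= eps * nrm x.

Definition closed_subgroup_O {n} (nrm : Vec n -> R) (G : (Vec n -> Vec n) -> Prop) : Prop :=
  subgroup_O nrm G /\
  (forall g h, (forall k, G (g k)) -> in_O nrm h -> op_conv nrm g h -> G h).

(* If d∞(u, v) = 0, pick a_i ∈ H_i almost realising the infimum defining
   d_{L_i}(u, v): then L_i(a_i) → 0 and a_i u → v.  Since O(V) is compact, a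
   subsequence of the a_i converges to some g ∈ O(V), so g u = v, and
   d_{L_i}(x, a_i x) ≤ L_i(a_i) gives d∞(x, g x) = 0 for every x.  Hence
   G = {g ∈ O(V) | d∞(x, g x) = 0 for all x} works: it is a subgroup by the
   triangle inequality for d∞, and it is closed because d∞(y, z) ≤ ‖y - z‖. *)

From Stdlib Require Import Reals Lra Lia List Classical ClassicalEpsilon FunctionalExtensionality.
Open Scope R_scope.

Ltac vec_ring := apply functional_extensionality; intros ?;
  unfold vadd, vsub, vscal, vzero; ring.

(** * Real sequences and subsequences *)

Definition strictly_increasing (s : nat -> nat) : Prop := forall k, (s k < s (S k))%nat.

Lemma strictly_increasing_le s : strictly_increasing s ->
  forall a b, (a <= b)%nat -> (s a <= s b)%nat.
Proof. intros Hs a b Hab; induction Hab; [lia|]. specialize (Hs m); lia. Qed.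

Lemma strictly_increasing_ge_id s : strictly_increasing s -> forall k, (k <= s k)%nat.
Proof. intros Hs k; induction k; [lia|]. specialize (Hs k); lia. Qed.

Lemma strictly_increasing_comp s t : strictly_increasing s -> strictly_increasing t ->
  strictly_increasing (fun k => s (t k)).
Proof.
  intros Hs Ht k. apply Nat.lt_le_trans with (s (S (t k))); [apply Hs|].
  apply strictly_increasing_le; [exact Hs| apply Ht].
Qed.

Lemma Un_cv_subseq u l s : strictly_increasing s -> Un_cv u l -> Un_cv (fun k => u (s k)) l.
Proof.
  intros Hs Hu eps He. destruct (Hu eps He) as [N HN]. exists N.
  intros k Hk. apply HN. pose proof (strictly_increasing_ge_id s Hs k). lia.
Qed.

Lemma Un_cv_const c : Un_cv (fun _ => c) c.
Proof. intros e He. exists 0%nat. intros. unfold Rdist. rewrite Rminus_diag, Rabs_R0. auto. Qed.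

Lemma Un_cv_inv_succ : Un_cv (fun k => / (INR k + 1)) 0.
Proof. exact RinvN_cv. Qed.

Lemma Un_cv_squeeze0 u v : (forall k, 0 <= u k <= v k) -> Un_cv v 0 -> Un_cv u 0.
Proof.
  intros H Hv e He. destruct (Hv e He) as [N HN]. exists N. intros k Hk.
  specialize (HN k Hk). specialize (H k). unfold Rdist in *. rewrite Rminus_0_r in *.
  rewrite Rabs_pos_eq in * by lra. lra.
Qed.

Lemma ValAdh_cv_subseq u l : ValAdh u l ->
  exists s, strictly_increasing s /\ Un_cv (fun k => u (s k)) l.
Proof.
  intros Hl.
  assert (Hex : forall Nk : nat * nat, exists p,
             (fst Nk <= p)%nat /\ Rabs (u p - l) < / (INR (snd Nk) + 1)).
  { intros [N k]. destruct (Hl (disc l (RinvN k)) N) as [p Hp]; [|exists p; exact Hp].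
    exists (RinvN k). intros y Hy. exact Hy. }
  destruct (choice _ Hex) as [pick Hpick].
  (* each index is picked beyond the previous one, with accuracy 1/(k+1) *)
  pose (s := fix s k := match k with
                        | O => pick (O, O)
                        | S k' => pick (S (s k'), k) end).
  assert (Hclose : forall k, Rabs (u (s k) - l) < / (INR k + 1)).
  { intros [|k]; apply (Hpick (_, _)). }
  exists s. split.
  - intros k. exact (proj1 (Hpick (S (s k), S k))).
  - intros eps He. destruct (Un_cv_inv_succ eps He) as [N HN]. exists N.
    intros k Hk. specialize (HN k Hk). specialize (Hclose k). unfold Rdist in *.
    rewrite Rminus_0_r, Rabs_pos_eq in HN by (left; apply RinvN_pos). lra.
Qed.

Lemma bounded_cv_subseq u M : (forall k, Rabs (u k) <= M) ->
  exists s, strictly_increasing s /\ exists l, Un_cv (fun k => u (s k)) l.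
Proof.
  intros Hb.
  destruct (Bolzano_Weierstrass u (fun c => -M <= c <= M) (compact_P3 _ _)) as [l Hl].
  { intros k. specialize (Hb k). pose proof (Rle_abs (u k)).
    pose proof (Rle_abs (- u k)). rewrite Rabs_Ropp in *. lra. }
  destruct (ValAdh_cv_subseq u l Hl) as [s Hs]. exists s. split; [apply Hs|].
  exists l. apply Hs.
Qed.

Lemma bounded_family_cv_subseq {X} (l : list X) (f : nat -> X -> R) M :
  (forall k x, Rabs (f k x) <= M) ->
  exists s, strictly_increasing s /\
    forall x, In x l -> exists c, Un_cv (fun k => f (s k) x) c.
Proof.
  intros Hb. induction l as [|x l IH].
  - exists (fun k => k). split; [intros k; lia| intros x []].
  - destruct IH as [s [Hs Hc]].
    destruct (bounded_cv_subseq (fun k => f (s k) x) M) as [t [Ht [c Hcv]]];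
      [intros; apply Hb|].
    exists (fun k => s (t k)). split; [apply strictly_increasing_comp; auto|].
    intros y [<-|Hy]; [exists c; exact Hcv|].
    destruct (Hc y Hy) as [c' Hc']. exists c'.
    exact (Un_cv_subseq (fun k => f (s k) y) c' t Ht Hc').
Qed.

Lemma bounded_finite_family_cv_subseq {X} (l : list X) (f : nat -> X -> R) M :
  (forall x, In x l) -> (forall k x, Rabs (f k x) <= M) ->
  exists s (c : X -> R), strictly_increasing s /\
    forall x, Un_cv (fun k => f (s k) x) (c x).
Proof.
  intros Hl Hb. destruct (bounded_family_cv_subseq l f M Hb) as [s [Hs Hc]].
  destruct (choice _ (fun x => Hc x (Hl x))) as [c Hcv]. exists s, c. auto.
Qed.

(** * Coordinates *)

Fixpoint fsum (n : nat) : (Fin.t n -> R) -> R :=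
  match n with
  | O => fun _ => 0
  | S m => fun f => f Fin.F1 + fsum m (fun i => f (Fin.FS i))
  end.

Lemma fsum_ext n f g : (forall j, f j = g j) -> fsum n f = fsum n g.
Proof. revert f g; induction n; intros f g H; simpl; auto. rewrite H. f_equal. apply IHn; auto. Qed.

Lemma fsum_plus n f g : fsum n (fun j => f j + g j) = fsum n f + fsum n g.
Proof. revert f g; induction n; intros f g; simpl; [lra|]. rewrite IHn. lra. Qed.

Lemma fsum_scal n c f : fsum n (fun j => c * f j) = c * fsum n f.
Proof. revert f; induction n; intros f; simpl; [lra|]. rewrite IHn. lra. Qed.

Lemma fsum_le n f g : (forall j, f j <= g j) -> fsum n f <= fsum n g.
Proof.
  revert f g; induction n; intros f g H; simpl; [lra|].
  pose proof (H Fin.F1). pose proof (IHn _ _ (fun i => H (Fin.FS i))). lra.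
Qed.

Lemma fsum_0 n : fsum n (fun _ => 0) = 0.
Proof. induction n; simpl; auto. rewrite IHn; lra. Qed.

Lemma fsum_eq0 n f : (forall j, f j = 0) -> fsum n f = 0.
Proof. intros H. rewrite (fsum_ext n f (fun _ => 0)) by exact H. apply fsum_0. Qed.

Lemma fsum_term n f j : (forall j, 0 <= f j) -> f j <= fsum n f.
Proof.
  revert f j; induction n; intros f j H; [inversion j|].
  simpl. apply (Fin.caseS' j).
  - pose proof (fsum_le n (fun _ => 0) _ (fun i => H (Fin.FS i))). rewrite fsum_0 in *. lra.
  - intros p. pose proof (IHn _ p (fun i => H (Fin.FS i))). pose proof (H Fin.F1). lra.
Qed.

Lemma fsum_cv n (f : nat -> Fin.t n -> R) c :
  (forall j, Un_cv (fun k => f k j) (c j)) -> Un_cv (fun k => fsum n (f k)) (fsum n c).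
Proof.
  revert f c; induction n; intros f c H; simpl; [apply Un_cv_const|].
  apply CV_plus; [apply H|]. apply (IHn (fun k i => f k (Fin.FS i))). intros; apply H.
Qed.

Fixpoint fin_enum n : list (Fin.t n) :=
  match n with O => nil | S m => Fin.F1 :: map Fin.FS (fin_enum m) end.

Lemma fin_enum_complete n (j : Fin.t n) : In j (fin_enum n).
Proof.
  induction n; [inversion j|]. apply (Fin.caseS' j); simpl; auto.
  intros p. right. apply in_map. auto.
Qed.

Definition unit_vec {n} (j : Fin.t n) : Vec n := fun i => if Fin.eq_dec j i then 1 else 0.

Definition vsum {n m} (f : Fin.t m -> Vec n) : Vec n := fun i => fsum m (fun j => f j i).

Definition l1 {n} (x : Vec n) : R := fsum n (fun j => Rabs (x j)).

Lemma coord_le_l1 {n} (x : Vec n) i : Rabs (x i) <= l1 x.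
Proof. apply (fsum_term n (fun j => Rabs (x j))). intros; apply Rabs_pos. Qed.

Lemma l1_vscal {n} c (x : Vec n) : l1 (vscal c x) = Rabs c * l1 x.
Proof. unfold l1, vscal. rewrite <- fsum_scal. apply fsum_ext. intros. apply Rabs_mult. Qed.

Lemma vec_decomp n (x : Vec n) : x = vsum (fun j => vscal (x j) (unit_vec j)).
Proof.
  apply functional_extensionality; intros i. unfold vsum, vscal.
  revert x i; induction n; intros x i; [inversion i|].
  simpl. unfold unit_vec at 1.
  apply (Fin.caseS' i).
  - destruct (Fin.eq_dec Fin.F1 Fin.F1) as [_|C]; [|congruence].
    rewrite fsum_eq0; [lra|]. intros j. unfold unit_vec.
    destruct Fin.eq_dec as [e|]; [discriminate e|lra].
  - intros p. destruct (Fin.eq_dec Fin.F1 (Fin.FS p)) as [e|_]; [discriminate e|].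
    rewrite (IHn (fun i => x (Fin.FS i)) p), Rmult_0_r, Rplus_0_l.
    apply fsum_ext. intros j. f_equal. unfold unit_vec.
    destruct (Fin.eq_dec j p), (Fin.eq_dec (Fin.FS j) (Fin.FS p)); subst; auto.
    + congruence.
    + apply Fin.FS_inj in e. congruence.
Qed.

Lemma linear_vzero {n} (a : Vec n -> Vec n) : is_linear a -> a vzero = vzero.
Proof.
  intros [_ Hs]. replace (@vzero n) with (vscal 0 (@vzero n)) by vec_ring.
  rewrite Hs. vec_ring.
Qed.

Lemma linear_vsub {n} (a : Vec n -> Vec n) x y : is_linear a -> a (vsub x y) = vsub (a x) (a y).
Proof.
  intros [Ha Hs]. replace (vsub x y) with (vadd x (vscal (-1) y)) by vec_ring.
  rewrite Ha, Hs. vec_ring.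
Qed.

Lemma linear_vsum {n m} (a : Vec n -> Vec n) (f : Fin.t m -> Vec n) : is_linear a ->
  a (vsum f) = vsum (fun j => a (f j)).
Proof.
  intros Ha. revert f; induction m; intros f.
  - apply (linear_vzero a Ha).
  - change (vsum f) with (vadd (f Fin.F1) (vsum (fun j => f (Fin.FS j)))).
    rewrite (proj1 Ha), IHm. reflexivity.
Qed.

Lemma linear_coords n (a : Vec n -> Vec n) x i : is_linear a ->
  a x i = fsum n (fun j => x j * a (unit_vec j) i).
Proof.
  intros Ha. rewrite (vec_decomp n x) at 1. rewrite linear_vsum by auto.
  apply fsum_ext. intros j. rewrite (proj2 Ha). reflexivity.
Qed.

Definition mx_map {n} (C : Fin.t n -> Fin.t n -> R) (x : Vec n) : Vec n :=
  fun i => fsum n (fun j => x j * C j i).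

Lemma mx_map_linear n C : is_linear (@mx_map n C).
Proof.
  split; intros; apply functional_extensionality; intros i; unfold mx_map, vadd, vscal.
  - rewrite <- fsum_plus. apply fsum_ext; intros; lra.
  - rewrite <- fsum_scal. apply fsum_ext; intros; lra.
Qed.

Definition vec_cv {n} (y : nat -> Vec n) (z : Vec n) : Prop :=
  forall i, Un_cv (fun k => y k i) (z i).

Lemma vec_cv_unique {n} (y : nat -> Vec n) z z' : vec_cv y z -> vec_cv y z' -> z = z'.
Proof.
  intros Hz Hz'. apply functional_extensionality; intros i.
  exact (UL_sequence _ _ _ (Hz i) (Hz' i)).
Qed.

Lemma vec_cv_mx_map n (A : nat -> Vec n -> Vec n) C :
  (forall k, is_linear (A k)) ->
  (forall j i, Un_cv (fun k => A k (unit_vec j) i) (C j i)) ->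
  forall x, vec_cv (fun k => A k x) (mx_map C x).
Proof.
  intros Hl HC x i. unfold mx_map.
  apply Un_cv_ext with (fun k => fsum n (fun j => x j * A k (unit_vec j) i)).
  - intros k. symmetry. apply linear_coords, Hl.
  - apply fsum_cv. intros j. apply CV_mult; [apply Un_cv_const| apply HC].
Qed.

(** * Finite-dimensional normed spaces *)

Section NormedSpace.

Variable n : nat.
Variable nrm : Vec n -> R.
Hypothesis Hn : is_norm nrm.

Lemma norm_nonneg x : 0 <= nrm x.
Proof. apply Hn. Qed.

Lemma norm_triangle x y : nrm (vadd x y) <= nrm x + nrm y.
Proof. apply Hn. Qed.

Lemma norm_vscal c x : nrm (vscal c x) = Rabs c * nrm x.
Proof. apply Hn. Qed.

Lemma norm_vzero : nrm vzero = 0.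
Proof.
  replace (@vzero n) with (vscal 0 (@vzero n)) by vec_ring.
  rewrite norm_vscal, Rabs_R0. lra.
Qed.

Lemma norm_eq0 x : nrm x = 0 -> x = vzero.
Proof. intros H. apply functional_extensionality. apply Hn, H. Qed.

Lemma norm_vopp x : nrm (vscal (-1) x) = nrm x.
Proof. rewrite norm_vscal, Rabs_left by lra. lra. Qed.

Lemma norm_vsub_sym y z : nrm (vsub y z) = nrm (vsub z y).
Proof. rewrite <- norm_vopp. f_equal. vec_ring. Qed.

Lemma norm_reverse_triangle y z : Rabs (nrm y - nrm z) <= nrm (vsub y z).
Proof.
  pose proof (norm_triangle z (vsub y z)). pose proof (norm_triangle y (vsub z y)).
  replace (vadd z (vsub y z)) with y in * by vec_ring.
  replace (vadd y (vsub z y)) with z in * by vec_ring.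
  rewrite (norm_vsub_sym z y) in *. apply Rabs_le. lra.
Qed.

Lemma norm_vsum m (f : Fin.t m -> Vec n) : nrm (vsum f) <= fsum m (fun j => nrm (f j)).
Proof.
  induction m; simpl.
  - change (vsum f) with (@vzero n). rewrite norm_vzero. lra.
  - change (vsum f) with (vadd (f Fin.F1) (vsum (fun j => f (Fin.FS j)))).
    pose proof (IHm (fun j => f (Fin.FS j))). pose proof (norm_triangle (f Fin.F1)
      (vsum (fun j => f (Fin.FS j)))). lra.
Qed.

Lemma norm_le_coords x : nrm x <= fsum n (fun j => Rabs (x j) * nrm (unit_vec j)).
Proof.
  rewrite (vec_decomp n x) at 1. eapply Rle_trans; [apply norm_vsum|].
  apply fsum_le. intros j. rewrite norm_vscal. lra.
Qed.

Lemma norm_cv_of_vec_cv (y : nat -> Vec n) z :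
  vec_cv y z -> Un_cv (fun k => nrm (vsub (y k) z)) 0.
Proof.
  intros H. apply Un_cv_squeeze0 with
    (fun k => fsum n (fun j => Rabs (vsub (y k) z j) * nrm (unit_vec j))).
  - intros k. split; [apply norm_nonneg| apply norm_le_coords].
  - replace 0 with (fsum n (fun j => Rabs (z j - z j) * nrm (unit_vec j))).
    + apply fsum_cv. intros j. apply CV_mult; [|apply Un_cv_const]. apply cv_cvabs.
      apply CV_minus; [apply H|apply Un_cv_const].
    + apply fsum_eq0. intros; rewrite Rminus_diag, Rabs_R0; lra.
Qed.

(* Compactness of the l1 unit sphere. *)
Lemma norm_ge_l1 : exists c, 0 < c /\ forall x, c * l1 x <= nrm x.
Proof.
  apply NNPP. intros Hc.
  assert (Hsmall : forall k : nat, exists y, l1 y = 1 /\ nrm y <= / (INR k + 1)).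
  { intros k. pose proof (RinvN_pos k) as Hk.
    assert (exists x, nrm x < / (INR k + 1) * l1 x) as [x Hx].
    { apply NNPP; intros Hno. apply Hc. exists (/ (INR k + 1)). split; [exact Hk|].
      intros x. apply Rnot_lt_le. intros Hlt. apply Hno. exists x. exact Hlt. }
    assert (Hpos : 0 < l1 x) by (pose proof (norm_nonneg x); nra).
    exists (vscal (/ l1 x) x).
    rewrite l1_vscal, norm_vscal, Rabs_pos_eq by (left; apply Rinv_0_lt_compat; auto).
    split; [field; lra|].
    apply Rmult_le_reg_l with (l1 x); auto. rewrite <- Rmult_assoc, Rinv_r by lra. lra. }
  destruct (choice _ Hsmall) as [y Hy].
  destruct (bounded_finite_family_cv_subseq (fin_enum n) y 1 (fin_enum_complete n))
    as [s [c [Hs Hcv]]].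
  { intros k j. rewrite <- (proj1 (Hy k)). apply coord_le_l1. }
  assert (Hc1 : l1 c = 1).
  { apply (UL_sequence (fun k => l1 (y (s k)))).
    - apply fsum_cv. intros j. apply cv_cvabs, Hcv.
    - apply Un_cv_ext with (fun _ => 1); [intros k; symmetry; apply Hy| apply Un_cv_const]. }
  assert (Hc0 : nrm c <= 0).
  { replace 0 with (0 + 0) by lra.
    apply (@Rle_cv_lim (fun _ => nrm c) (fun k => nrm (y (s k)) + nrm (vsub (y (s k)) c))).
    - intros k. rewrite norm_vsub_sym.
      replace c with (vadd (y (s k)) (vsub c (y (s k)))) at 1 by vec_ring. apply norm_triangle.
    - apply Un_cv_const.
    - apply CV_plus; [|apply norm_cv_of_vec_cv; exact Hcv].
      apply Un_cv_squeeze0 with (fun k => / (INR (s k) + 1)).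
      + intros k. split; [apply norm_nonneg| apply Hy].
      + apply (Un_cv_subseq _ _ s Hs Un_cv_inv_succ). }
  pose proof (norm_eq0 c ltac:(pose proof (norm_nonneg c); lra)) as ->.
  unfold l1, vzero in Hc1. rewrite fsum_eq0 in Hc1; [lra|]. intros; apply Rabs_R0.
Qed.

Lemma coord_le_norm : exists C, 0 < C /\ forall y i, Rabs (y i) <= C * nrm y.
Proof.
  destruct norm_ge_l1 as [c [Hc Hl]]. exists (/ c). split; [apply Rinv_0_lt_compat; auto|].
  intros y i. apply Rmult_le_reg_l with c; auto. rewrite <- Rmult_assoc, Rinv_r, Rmult_1_l by lra.
  eapply Rle_trans; [|apply Hl]. apply Rmult_le_compat_l; [lra| apply coord_le_l1].
Qed.

Lemma vec_cv_of_norm_cv (y : nat -> Vec n) z :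
  Un_cv (fun k => nrm (vsub (y k) z)) 0 -> vec_cv y z.
Proof.
  intros H i e He. destruct coord_le_norm as [C [HC0 HC]].
  destruct (H (e / C)) as [N HN]; [apply Rdiv_lt_0_compat; auto|].
  exists N. intros k Hk. specialize (HN k Hk). unfold Rdist in *.
  rewrite Rminus_0_r, Rabs_pos_eq in HN by apply norm_nonneg.
  eapply Rle_lt_trans; [apply (HC (vsub (y k) z) i)|].
  apply Rmult_lt_compat_l with (r := C) in HN; [|auto].
  replace (C * (e / C)) with e in HN by (field; lra). exact HN.
Qed.

(** * The orthogonal group O(V) *)

Lemma in_O_id : in_O nrm (fun x => x).
Proof. split; [split; auto|split; auto]. intros y; exists y; auto. Qed.

Lemma in_O_comp a b : in_O nrm a -> in_O nrm b -> in_O nrm (fun x => a (b x)).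
Proof.
  intros [[Ha1 Ha2] [Hai Has]] [[Hb1 Hb2] [Hbi Hbs]]. split; [split|split].
  - intros x y. rewrite Hb1, Ha1. auto.
  - intros c x. rewrite Hb2, Ha2. auto.
  - intros x. rewrite Hai; auto.
  - intros y. destruct (Has y) as [x1 <-]. destruct (Hbs x1) as [x <-]. exists x; auto.
Qed.

Lemma in_O_injective a : in_O nrm a -> forall x y, a x = a y -> x = y.
Proof.
  intros [Hl [Hi _]] x y E.
  assert (Hxy : vsub x y = vzero).
  { apply norm_eq0. rewrite <- Hi, linear_vsub, E by auto.
    replace (vsub (a y) (a y)) with (@vzero n) by vec_ring. apply norm_vzero. }
  apply functional_extensionality; intros i.
  apply (f_equal (fun v => v i)) in Hxy. unfold vsub, vzero in Hxy. lra.
Qed.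

Lemma in_O_inverse g : in_O nrm g ->
  exists b, in_O nrm b /\ (forall x, b (g x) = x) /\ (forall x, g (b x) = x).
Proof.
  intros Hg. pose proof Hg as [[Hg1 Hg2] [Hgi Hgs]].
  destruct (choice _ Hgs) as [b Hb].
  pose proof (in_O_injective g Hg) as Hinj.
  assert (Hbg : forall x, b (g x) = x) by (intros x; apply Hinj; rewrite Hb; auto).
  exists b. split; [|split; auto]. split; [split|split].
  - intros x y. apply Hinj. rewrite Hg1, !Hb. auto.
  - intros c x. apply Hinj. rewrite Hg2, !Hb. auto.
  - intros x. rewrite <- (Hgi (b x)), Hb. auto.
  - intros y. exists (g y). auto.
Qed.

Lemma Un_cv_norm_of_vec_cv (y : nat -> Vec n) z : vec_cv y z -> Un_cv (fun k => nrm (y k)) (nrm z).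
Proof.
  intros H e He. destruct (norm_cv_of_vec_cv y z H e He) as [N HN].
  exists N. intros k Hk. specialize (HN k Hk). unfold Rdist in *. rewrite Rminus_0_r in HN.
  eapply Rle_lt_trans; [apply norm_reverse_triangle|].
  eapply Rle_lt_trans; [apply Rle_abs| exact HN].
Qed.

Lemma vec_cv_apply (B : nat -> Vec n -> Vec n) h (y : nat -> Vec n) z :
  (forall k, in_O nrm (B k)) -> (forall x, vec_cv (fun k => B k x) (h x)) ->
  vec_cv y z -> vec_cv (fun k => B k (y k)) (h z).
Proof.
  intros HB Hh Hy i.
  apply Un_cv_ext with (fun k => B k (vsub (y k) z) i + B k z i).
  { intros k. rewrite linear_vsub by apply HB. unfold vsub. ring. }
  replace (h z i) with (0 + h z i) by ring. apply CV_plus; [|apply Hh].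
  apply (vec_cv_of_norm_cv (fun k => B k (vsub (y k) z)) vzero).
  apply Un_cv_ext with (fun k => nrm (vsub (y k) z)); [|apply norm_cv_of_vec_cv, Hy].
  intros k. replace (vsub (B k (vsub (y k) z)) vzero) with (B k (vsub (y k) z)) by vec_ring.
  symmetry. apply HB.
Qed.

Lemma vec_cv_lim_left_inverse (A B : nat -> Vec n -> Vec n) g h :
  (forall k, in_O nrm (B k)) -> (forall k x, B k (A k x) = x) ->
  (forall x, vec_cv (fun k => A k x) (g x)) -> (forall x, vec_cv (fun k => B k x) (h x)) ->
  forall x, h (g x) = x.
Proof.
  intros HB HBA Hg Hh x. apply (vec_cv_unique (fun k => B k (A k x))).
  - apply vec_cv_apply; auto.
  - intros i. apply Un_cv_ext with (fun _ => x i); [intros k; rewrite HBA; auto| apply Un_cv_const].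
Qed.

(* The limit of the inverses shows that the limit map is onto. *)
Lemma in_O_cv_subseq (A : nat -> Vec n -> Vec n) : (forall k, in_O nrm (A k)) ->
  exists s g, strictly_increasing s /\ in_O nrm g /\
    forall x, vec_cv (fun k => A (s k) x) (g x).
Proof.
  intros HA.
  destruct (choice _ (fun k => in_O_inverse (A k) (HA k))) as [B HB].
  destruct coord_le_norm as [C [HC0 HC]].
  pose (entry := fun k (p : bool * (Fin.t n * Fin.t n)) =>
     let '(b, (j, i)) := p in (if b then A k else B k) (unit_vec j) i).
  destruct (bounded_finite_family_cv_subseq
              (list_prod (true :: false :: nil) (list_prod (fin_enum n) (fin_enum n)))
              entry (C * fsum n (fun j => nrm (unit_vec j)))) as [s [c [Hs Hc]]].
  { intros [b [j i]]. apply in_prod; [destruct b; simpl; auto|].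
    apply in_prod; apply fin_enum_complete. }
  { intros k [b [j i]]. simpl. eapply Rle_trans; [apply HC|].
    assert (Hiso : nrm ((if b then A k else B k) (unit_vec j)) = nrm (unit_vec j))
      by (destruct b; [apply (HA k)| apply (HB k)]).
    rewrite Hiso. apply Rmult_le_compat_l; [lra|].
    apply (fsum_term n (fun j => nrm (unit_vec j))). intros; apply norm_nonneg. }
  pose (g := mx_map (fun j i => c (true, (j, i)))).
  pose (h := mx_map (fun j i => c (false, (j, i)))).
  assert (Hg : forall x, vec_cv (fun k => A (s k) x) (g x)).
  { apply vec_cv_mx_map; [intros k; apply HA|]. intros j i. exact (Hc (true, (j, i))). }
  assert (Hh : forall x, vec_cv (fun k => B (s k) x) (h x)).
  { apply vec_cv_mx_map; [intros k; apply HB|]. intros j i. exact (Hc (false, (j, i))). }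
  assert (Hgh : forall x, g (h x) = x).
  { apply (vec_cv_lim_left_inverse (fun k => B (s k)) (fun k => A (s k)));
      [intros k; apply HA| intros k x; apply HB| exact Hh| exact Hg]. }
  exists s, g. split; [exact Hs|]. split; [|exact Hg]. split; [apply mx_map_linear|split].
  - intros x. apply (UL_sequence (fun k => nrm (A (s k) x))).
    + apply Un_cv_norm_of_vec_cv, Hg.
    + apply Un_cv_ext with (fun _ => nrm x); [intros k; symmetry; apply HA| apply Un_cv_const].
  - intros y. exists (h y). apply Hgh.
Qed.

End NormedSpace.

(** * Holonomic metrics *)

Lemma sqrt_sum_sq_le a b : 0 <= a -> 0 <= b -> sqrt (a ^ 2 + b ^ 2) <= a + b.
Proof. intros Ha Hb. rewrite <- (sqrt_pow2 (a + b)) by lra. apply sqrt_le_1_alt. nra. Qed.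

Lemma sqrt_sum_sq_ge a b : 0 <= a -> a <= sqrt (a ^ 2 + b ^ 2).
Proof. intros Ha. rewrite <- (sqrt_pow2 a) at 1 by lra. apply sqrt_le_1_alt. nra. Qed.

Section HolonomicMetric.

Variable n : nat.
Variable nrm : Vec n -> R.
Variable H : (Vec n -> Vec n) -> Prop.
Variable L : (Vec n -> Vec n) -> R.
Variable d : Vec n -> Vec n -> R.
Hypothesis Hmet : is_holonomic_metric nrm H L d.

Lemma holonomic_metric_le a x y : H a -> d x y <= sqrt (L a ^ 2 + nrm (vsub (a x) y) ^ 2).
Proof. intros Ha. apply (Hmet x y). exists a. auto. Qed.

Lemma holonomic_metric_le_norm : is_norm nrm -> holonomic nrm H L ->
  forall y z, d y z <= nrm (vsub y z).
Proof.
  intros Hn [[_ [Hid _]] [[_ [HL0 _]] _]] y z.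
  eapply Rle_trans; [apply (holonomic_metric_le (fun x => x)); exact Hid|].
  assert (L (fun x => x) = 0) as -> by (apply HL0; auto).
  cbv beta. replace (0 ^ 2 + nrm (vsub y z) ^ 2) with (nrm (vsub y z) ^ 2) by ring.
  rewrite sqrt_pow2 by apply (norm_nonneg n nrm Hn). lra.
Qed.

Lemma holonomic_metric_approx u v eps : 0 < eps ->
  exists a, H a /\ sqrt (L a ^ 2 + nrm (vsub (a u) v) ^ 2) < d u v + eps.
Proof.
  intros He. apply NNPP; intros Hno.
  assert (d u v + eps <= d u v); [|lra].
  apply (Hmet u v). intros r [a [Ha ->]]. apply Rnot_lt_le. intros Hlt.
  apply Hno. exists a; auto.
Qed.

End HolonomicMetric.

Lemma unif_conv_compact_pointwise n (nrm : Vec n -> R) d dinf : unif_conv_compact nrm d dinf ->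
  forall u v, Un_cv (fun i => d i u v) (dinf u v).
Proof.
  intros Hc u v e He.
  destruct (Hc (fun x => x = u \/ x = v)) with (eps := e) as [N HN]; auto.
  - intros I U _ Hcov. destruct (Hcov u (or_introl eq_refl)) as [iu Hu].
    destruct (Hcov v (or_intror eq_refl)) as [iv Hv].
    exists (iu :: iv :: nil). intros x [-> | ->]; [exists iu | exists iv]; simpl; auto.
  - exists N. intros i Hi. apply HN; auto.
Qed.

(** * Isometries displacing no point for d∞ *)

Definition null_displacement_group {n} (nrm : Vec n -> R) (dinf : Vec n -> Vec n -> R)
  (g : Vec n -> Vec n) : Prop := in_O nrm g /\ forall x, dinf x (g x) = 0.

Lemma le_0_of_le_eps_mul a b : 0 <= b -> (forall eps, 0 < eps -> a <= eps * b) -> a <= 0.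
Proof.
  intros Hb H. apply Rnot_lt_le. intros Ha.
  specialize (H (a / (b + 1)) ltac:(apply Rdiv_lt_0_compat; lra)).
  assert (a / (b + 1) * b < a); [|lra].
  replace (a / (b + 1) * b) with (a - a / (b + 1)) by (field; lra).
  assert (0 < a / (b + 1)) by (apply Rdiv_lt_0_compat; lra). lra.
Qed.

Lemma null_displacement_closed_subgroup n (nrm : Vec n -> R) dinf :
  is_norm nrm -> semi_metric dinf -> (forall y z, dinf y z <= nrm (vsub y z)) ->
  closed_subgroup_O nrm (null_displacement_group nrm dinf).
Proof.
  intros Hn [Hd0 [Hdd [Hdsym Hdtri]]] Hdle.
  split; [split; [|split; [|split]]|].
  - intros a [Ha _]; auto.
  - split; [apply in_O_id| exact Hdd].
  - intros a b [Ha Ha0] [Hb Hb0]. split; [apply in_O_comp; auto|].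
    intros x. pose proof (Hdtri x (b x) (a (b x))). rewrite Hb0, Ha0 in *.
    pose proof (Hd0 x (a (b x))). lra.
  - intros a [Ha Ha0]. destruct (in_O_inverse n nrm Hn a Ha) as [b [Hb [Hba Hab]]].
    exists b. split; [split; auto|split; auto].
    intros x. rewrite <- (Hab x) at 1. rewrite Hdsym. apply Ha0.
  - intros g h Hg Hh Hc. split; [exact Hh|]. intros x.
    apply Rle_antisym; [|apply Hd0].
    apply (le_0_of_le_eps_mul _ (nrm x) (norm_nonneg n nrm Hn x)). intros eps He.
    destruct (Hc eps He) as [N HN].
    pose proof (Hdtri x (g N x) (h x)). pose proof (proj2 (Hg N) x).
    pose proof (Hdle (g N x) (h x)). pose proof (HN N (le_n N) x). lra.
Qed.

Lemma dinf_le_norm n (nrm : Vec n -> R) H L d dinf : is_norm nrm ->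
  (forall i, holonomic nrm (H i) (L i)) ->
  (forall i, is_holonomic_metric nrm (H i) (L i) (d i)) ->
  (forall u v, Un_cv (fun i => d i u v) (dinf u v)) ->
  forall y z, dinf y z <= nrm (vsub y z).
Proof.
  intros Hn Hhol Hmet Hpw y z.
  apply (@Rle_cv_lim (fun i => d i y z) (fun _ => nrm (vsub y z))); [|auto| apply Un_cv_const].
  intros i. apply (holonomic_metric_le_norm n nrm (H i) (L i)); auto.
Qed.

Lemma dinf_zero_orbit n (nrm : Vec n -> R) H L d dinf : is_norm nrm ->
  (forall i, holonomic nrm (H i) (L i)) ->
  (forall i, is_holonomic_metric nrm (H i) (L i) (d i)) ->
  (forall u v, Un_cv (fun i => d i u v) (dinf u v)) ->
  (forall u v, 0 <= dinf u v) ->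
  forall u v, dinf u v = 0 -> exists g, null_displacement_group nrm dinf g /\ v = g u.
Proof.
  intros Hn Hhol Hmet Hpw Hd0 u v Huv.
  pose (t := fun i => d i u v + / (INR i + 1)).
  assert (Ht : Un_cv t 0).
  { replace 0 with (dinf u v + 0) by lra. apply CV_plus; [apply Hpw| apply Un_cv_inv_succ]. }
  destruct (choice _ (fun i => holonomic_metric_approx n nrm (H i) (L i) (d i) (Hmet i)
                                 u v _ (RinvN_pos i))) as [a Ha].
  assert (HaO : forall i, in_O nrm (a i)) by (intros i; apply (Hhol i), Ha).
  assert (HLa : forall i, 0 <= L i (a i) <= t i).
  { intros i. destruct (Ha i) as [Hai Hlt].
    pose proof (proj1 (proj1 (proj2 (Hhol i))) _ Hai) as HL0.
    pose proof (sqrt_sum_sq_ge _ (nrm (vsub (a i u) v)) HL0). unfold t. lra. }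
  assert (Hau : forall i, 0 <= nrm (vsub (a i u) v) <= t i).
  { intros i. destruct (Ha i) as [_ Hlt].
    pose proof (norm_nonneg n nrm Hn (vsub (a i u) v)) as Hnn.
    pose proof (sqrt_sum_sq_ge _ (L i (a i)) Hnn) as Hge. rewrite Rplus_comm in Hge.
    unfold t. lra. }
  destruct (in_O_cv_subseq n nrm Hn a HaO) as [s [g [Hs [Hg Hcv]]]].
  exists g. split; [split; [exact Hg|]|].
  - intros x. apply Rle_antisym; [|apply Hd0].
    apply (@Rle_cv_lim (fun k => d (s k) x (g x))
             (fun k => L (s k) (a (s k)) + nrm (vsub (a (s k) x) (g x)))).
    + intros k. eapply Rle_trans; [apply (holonomic_metric_le n nrm _ _ _ (Hmet (s k))), Ha|].
      apply sqrt_sum_sq_le; [apply HLa| apply (norm_nonneg n nrm Hn)].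
    + apply (Un_cv_subseq (fun i => d i x (g x))); auto.
    + replace 0 with (0 + 0) by lra. apply CV_plus.
      * apply Un_cv_squeeze0 with (fun k => t (s k)); [intros k; apply HLa| apply Un_cv_subseq; auto].
      * apply (norm_cv_of_vec_cv n nrm Hn), (Hcv x).
  - apply (vec_cv_unique (fun k => a (s k) u)); [|apply Hcv].
    apply (vec_cv_of_norm_cv n nrm Hn).
    apply Un_cv_squeeze0 with (fun k => t (s k)); [intros k; apply Hau| apply Un_cv_subseq; auto].
Qed.

Theorem mainTheorem15 (n : nat) (nrm : Vec n -> R)
  (H : nat -> (Vec n -> Vec n) -> Prop) (L : nat -> (Vec n -> Vec n) -> R)
  (d : nat -> Vec n -> Vec n -> R) (dinf : Vec n -> Vec n -> R) :
  is_norm nrm ->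
  (forall i, holonomic nrm (H i) (L i)) ->
  (forall i, is_holonomic_metric nrm (H i) (L i) (d i)) ->
  finite_rep_type nrm H ->
  semi_metric dinf ->
  unif_conv_compact nrm d dinf ->
  exists G, closed_subgroup_O nrm G /\
    forall u v, dinf u v = 0 <-> exists g, G g /\ v = g u.
Proof.
  intros Hn Hhol Hmet _ Hsm Hconv.
  pose proof (unif_conv_compact_pointwise n nrm d dinf Hconv) as Hpw.
  exists (null_displacement_group nrm dinf). split.
  - apply null_displacement_closed_subgroup; auto.
    apply (dinf_le_norm n nrm H L d); auto.
  - intros u v. split.
    + apply (dinf_zero_orbit n nrm H L d); auto. apply Hsm.
    + intros [g [[_ Hg] ->]]. apply Hg.
Qed.
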